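(* The intersection of two Bianchi-convex subsets of $\mathcal{A}_n$ is Bianchi-convex.
   Context: $\mathcal{A}_n$ is the Euclidean space of algebraic curvature tensors on $\mathbb{R}^n$: symmetric bilinear forms on $\Lambda^2\mathbb{R}^n$ satisfying the first Bianchi identity, viewed as self-adjoint endomorphisms of $\Lambda^2\mathbb{R}^n$ (with $e_i\wedge e_j$, $i<j$, orthonormal), scalar product $\mathrm{tr}(R\circ S)$. Supporting submanifold of a closed $C$ at $x_0\in\partial C$: a codimension-one submanifold $N\ni x_0$ such that for some open neighbourhood $U$ of $x_0$, $U\setminus N$ has two components $U_1,U_2$ with $C\cap\overline U\subseteq\overline{U_1}$; $\mathrm{II}^N_S(X,Y)=\langle\nabla_XY,\mathbf n_S\rangle$ with $\mathbf n$ the unit normal pointing away from $C$. $(T_1,\dots,T_n)\in\mathcal{A}_n^n$ satisfies the second Bianchi identity if for some orthonormal basis $(b_i)$ of $\mathbb{R}^n$, $T_i(b_j\wedge b_k)+T_j(b_k\wedge b_i)+T_k(b_i\wedge b_j)=0$ for all $i,j,k$. A closed $\Omega\subseteq\mathcal{A}_n$ is Bianchi-convex if for every $\epsilon>0$ and $R\in\partial\Omega$ there is a supporting submanifold $N$ of $\Omega$ in $R$ such that for all $S\in N$ and all $(T_1,\dots,T_n)\in(T_SN)^n$ satisfying the second Bianchi identity, $\sum_i\mathrm{II}^N_S(T_i,T_i)\le\epsilon\sum_i\|T_i\|^2$. *)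

From HB Require Import structures.
From mathcomp Require Import all_boot all_order all_algebra.
From mathcomp Require Import all_classical all_reals all_analysis.
Set Implicit Arguments. Unset Strict Implicit. Unset Printing Implicit Defensive.
Import Order.TTheory GRing.Theory Num.Theory.
Import numFieldNormedType.Exports.
Local Open Scope classical_set_scope.
Local Open Scope ring_scope.

Fixpoint Ck {R : realType} {U W : normedModType R} (k : nat) (f : U -> W) : Prop :=
  match k with
  | 0 => continuous f
  | k'.+1 => (forall x, differentiable f x) /\
             (forall v : U, Ck k' (fun x => 'D_v f x))
  end.
Definition smooth {R : realType} {U W : normedModType R} (f : U -> W) :=
  forall k, Ck k f.

(* Ambient space: a bilinear form on R^n (x) R^n, encoded as an
   (n*n) x (n*n) matrix; entry (i,j,k,l) = <R(e_i /\ e_j), e_k /\ e_l>. *)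
Definition amb (R : realType) (n : nat) := 'M[R]_(n * n, n * n).

Definition ent {R : realType} {n : nat} (X : amb R n) (i j k l : 'I_n) : R :=
  X (mxvec_index i j) (mxvec_index k l).

(* Algebraic curvature tensors: symmetric bilinear forms on Lambda^2 R^n
   satisfying the first Bianchi identity. *)
Definition is_act {R : realType} {n : nat} (X : amb R n) : Prop :=
  (forall i j k l, ent X i j k l = - ent X j i k l) /\
  (forall i j k l, ent X i j k l = - ent X i j l k) /\
  (forall i j k l, ent X i j k l = ent X k l i j) /\
  (forall i j k l, ent X i j k l + ent X j k i l + ent X k i j l = 0).

Definition Acurv (R : realType) (n : nat) : set (amb R n) := [set X | is_act X].
Arguments Acurv R n : clear implicits.

(* Scalar product tr(X o Y), X, Y seen as self-adjoint endomorphisms of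
   Lambda^2 R^n in the orthonormal basis (e_i /\ e_j)_{i<j}. *)
Definition ip {R : realType} {n : nat} (X Y : amb R n) : R :=
  \sum_(p : 'I_n * 'I_n | (p.1 < p.2)%N) \sum_(q : 'I_n * 'I_n | (q.1 < q.2)%N)
     ent X p.1 p.2 q.1 q.2 * ent Y q.1 q.2 p.1 p.2.

Definition sqn {R : realType} {n : nat} (X : amb R n) : R := ip X X.

Definition relopen {R : realType} {n : nat} (U : set (amb R n)) : Prop :=
  exists W, open W /\ U = W `&` Acurv R n.

Definition relinterior {R : realType} {n : nat} (O : set (amb R n)) : set (amb R n) :=
  [set x | O x /\ exists e : R, 0 < e /\ ball x e `&` Acurv R n `<=` O].

Definition relboundary {R : realType} {n : nat} (O : set (amb R n)) : set (amb R n) :=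
  closure O `\` relinterior O.

(* Embedded codimension-one (in A_n) smooth submanifold of A_n:
   locally a regular level set inside A_n of a smooth function. *)
Definition hypersurface {R : realType} {n : nat} (N : set (amb R n)) : Prop :=
  N `<=` Acurv R n /\
  forall P, N P -> exists (W : set (amb R n)) (f : amb R n -> R^o),
    [/\ open W, W P, smooth f,
        N `&` W = [set x | Acurv R n x /\ W x /\ f x = 0] &
        exists T, Acurv R n T /\ 'D_T f P != 0].

Definition tangent {R : realType} {n : nat} (N : set (amb R n)) (S T : amb R n) : Prop :=
  exists g : R^o -> amb R n,
    [/\ g 0 = S, (exists d : R, 0 < d /\ forall t : R, `|t| < d -> N (g t)),
        derivable g 0 1 & 'D_1 g 0 = T].

(* Supporting submanifold N of C at x0, with U, the two components U1 U2
   of U \ N, and nrm the unit normal field along N pointing away from C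
   (i.e. into U2). *)
Definition supporting {R : realType} {n : nat} (C N U U1 U2 : set (amb R n))
  (nrm : amb R n -> amb R n) (x0 : amb R n) : Prop :=
  [/\ hypersurface N, N x0,
      [/\ relopen U, U x0,
          U `\` N = U1 `|` U2, U1 `&` U2 = set0 &
          [/\ relopen U1, relopen U2, U1 !=set0 /\ U2 !=set0,
              connected U1 & connected U2]],
      C `&` closure U `<=` closure U1 &
      forall S, N S ->
        [/\ Acurv R n (nrm S), sqn (nrm S) = 1,
            (forall T, tangent N S T -> ip (nrm S) T = 0) &
            (U S -> exists d : R, 0 < d /\
               forall t : R, 0 < t < d -> U2 (S + t *: nrm S))]].

Definition mlin {R : realType} {n : nat} (X : amb R n) (x y z w : 'I_n -> R) : R :=
  \sum_a \sum_b \sum_c \sum_d x a * y b * z c * w d * ent X a b c d.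

(* Second Bianchi identity for (T_1, ..., T_n) in some orthonormal basis
   (b_i) = rows of an orthogonal matrix b. *)
Definition second_bianchi {R : realType} {n : nat} (T : 'I_n -> amb R n) : Prop :=
  exists b : 'M[R]_n, b *m b^T = 1%:M /\
    forall i j k l m : 'I_n,
      mlin (T i) (fun a => b j a) (fun a => b k a) (fun a => b l a) (fun a => b m a)
    + mlin (T j) (fun a => b k a) (fun a => b i a) (fun a => b l a) (fun a => b m a)
    + mlin (T k) (fun a => b i a) (fun a => b j a) (fun a => b l a) (fun a => b m a)
    = 0.

(* Sum_i II^N_S(T_i, T_i) <= c, with II^N_S(X, X) = <nabla_X Y, n_S> for any
   vector field Y (extended to the ambient space, differentiable at S)
   tangent to N near S with Y(S) = X; the value does not depend on Y. *)
Definition II_sum_le {R : realType} {n : nat} (N : set (amb R n))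
  (nrm : amb R n -> amb R n) (S : amb R n) (T : 'I_n -> amb R n) (c : R) : Prop :=
  forall Y : 'I_n -> amb R n -> amb R n,
    (forall i, [/\ differentiable (Y i) S, Y i S = T i &
       exists W, [/\ open W, W S & forall P, N P -> W P -> tangent N P (Y i P)]]) ->
    \sum_i ip ('D_(T i) (Y i) S) (nrm S) <= c.

Definition bianchi_convex {R : realType} {n : nat} (O : set (amb R n)) : Prop :=
  closed O /\
  forall (eps : R), 0 < eps -> forall x0, relboundary O x0 ->
    exists N U U1 U2 nrm, supporting O N U U1 U2 nrm x0 /\
      forall S, N S -> forall T : 'I_n -> amb R n,
        (forall i, tangent N S (T i)) -> second_bianchi T ->
        II_sum_le N nrm S T (eps * \sum_i sqn (T i)).

From HB Require Import structures.
From mathcomp Require Import all_boot all_order all_algebra.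
From mathcomp Require Import all_classical all_reals all_analysis.
Local Open Scope classical_set_scope.

Import Order.TTheory GRing.Theory Num.Theory.
Import numFieldNormedType.Exports.
Local Open Scope ring_scope.

(* A boundary point of O1 ∩ O2 is a boundary point of O1 or of O2, and a
   submanifold supporting O_i at that point also supports the smaller set
   O1 ∩ O2; the bound on the second fundamental form involves only the
   submanifold and its normal, not the set it supports. *)

Lemma relinteriorI (R : realType) (n : nat) (O1 O2 : set (amb R n)) :
  relinterior O1 `&` relinterior O2 `<=` relinterior (O1 `&` O2).
Proof.
move=> x [int1 int2].
case: int1 => O1x [e1 [e1_gt0 sub1]]; case: int2 => O2x [e2 [e2_gt0 sub2]].
split=> //; exists (Num.min e1 e2); split; first by rewrite lt_min e1_gt0 e2_gt0.
move=> y [yB yA]; split.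
- by apply: sub1; split=> //; apply: le_ball yB; rewrite ge_min lexx.
- by apply: sub2; split=> //; apply: le_ball yB; rewrite ge_min lexx orbT.
Qed.

Lemma relboundaryI (R : realType) (n : nat) (O1 O2 : set (amb R n)) :
  relboundary (O1 `&` O2) `<=` relboundary O1 `|` relboundary O2.
Proof.
move=> x [/closureI[cl1 cl2] notint].
have [int1|] := pselect (relinterior O1 x); last by left.
have [int2|] := pselect (relinterior O2 x); last by right.
by case: notint; exact: (@relinteriorI R n O1 O2 x (conj int1 int2)).
Qed.

Lemma supporting_subset (R : realType) (n : nat) (C D N U U1 U2 : set (amb R n))
    (nrm : amb R n -> amb R n) (x0 : amb R n) :
  D `<=` C -> supporting C N U U1 U2 nrm x0 -> supporting D N U U1 U2 nrm x0.
Proof.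
move=> DC [hypN Nx0 split_U supC normal]; split=> // y [Dy Uy].
by apply: supC; split=> //; apply: DC.
Qed.

Theorem lemma3p5 (R : realType) (n : nat) (O1 O2 : set (amb R n)) :
  O1 `<=` Acurv R n -> O2 `<=` Acurv R n ->
  bianchi_convex O1 -> bianchi_convex O2 -> bianchi_convex (O1 `&` O2).
Proof.
move=> _ _ [cl1 cvx1] [cl2 cvx2]; split; first exact: closedI.
move=> eps eps_gt0 x0 /relboundaryI[bd1|bd2].
- have [N [U [U1 [U2 [nrm [supp II]]]]]] := cvx1 eps eps_gt0 x0 bd1.
  exists N, U, U1, U2, nrm; split=> //.
  by apply: supporting_subset supp; apply: subIsetl.
- have [N [U [U1 [U2 [nrm [supp II]]]]]] := cvx2 eps eps_gt0 x0 bd2.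
  exists N, U, U1, U2, nrm; split=> //.
  by apply: supporting_subset supp; apply: subIsetr.
Qed.
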